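(* In the setting of the finite systems (see context), for every $t$: $$\det(\lambda I-L1_N(t))=\lambda^{N+2}-C_0\lambda^{N+1}-C_1\lambda^{N}-\dots-C_{N+1},$$ $$\det(\lambda I-L2_N(t))=\lambda^{N+p+1}-\tilde C_0\lambda^{N+p}-\tilde C_1\lambda^{N+p-1}-\dots-\tilde C_{N+p},$$ i.e. the finite rank coefficients $C_v$ and $\tilde C_v$ coincide, up to sign, with the coefficients of the characteristic polynomials of $L1_N$ and $L2_N$.
   Context: Let $p\ge1$, $N\ge 2p-1$, and let $a_0,\dots,a_N$ and $b_0,\dots,b_N$ be nonzero complex numbers (e.g. values at time $t$ of solutions of the finite Bogoyavlensky lattices $\dot a_i=a_i(\prod_{j=1}^p a_{i+j}-\prod_{j=1}^p a_{i-j})$ and $\dot b_i=b_i(\sum_{j=1}^p b_{i+j}-\sum_{j=1}^p b_{i-j})$, $i=0,\dots,N$, with $a_l=b_l=0$ for $l<0$ or $l>N$). $L1_N$ is the $(N+2)\times(N+2)$ matrix (indices $0,\dots,N+1$) with $(L1_N)_{i,i+p}=1$ for $0\le i\le N+1-p$, $(L1_N)_{i+1,i}=a_i$ for $0\le i\le N$, other entries zero; $S^l_k=(L1_N^k)_{l-1,0}$ for $l=1,\dots,p$, $k\ge0$. $C_0,\dots,C_{N+1}$ are the complex numbers with $S^l_k=\sum_{v=0}^{N+1}C_vS^l_{k-v-1}$ for all $k\ge N+2$, $l=1,\dots,p$. $L2_N$ is the $(N+p+1)\times(N+p+1)$ matrix (indices $0,\dots,N+p$) with $(L2_N)_{i,i+1}=1$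 for $0\le i\le N+p-1$, $(L2_N)_{i+p,i}=b_i$ for $0\le i\le N$, other entries zero; $\tilde S^l_k=(L2_N^k)_{0,l-1}$; $\tilde C_0,\dots,\tilde C_{N+p}$ are the complex numbers with $\tilde S^l_k=\sum_{v=0}^{N+p}\tilde C_v\tilde S^l_{k-v-1}$ for all $k\ge N+p+1$, $l=1,\dots,p$. Standing fact from the paper: with $\alpha_{i,j}=S^{\operatorname{rem}(i,p)+1}_{\lfloor i/p\rfloor+j}$, the determinants $\det(\alpha_{i,j})_{i,j=0}^k$ are nonzero for $k=0,\dots,N+1$ and the matrix $(\alpha_{i,j})_{i,j\ge0}$ has rank $N+2$ (analogously for the $\tilde S$ with $\tilde\alpha_{i,j}=\tilde S^{\operatorname{rem}(j,p)+1}_{i+\lfloor j/p\rfloor}$, orders up to $N+p+1$), so these coefficients are uniquely determined. *)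

From HB Require Import structures.
From mathcomp Require Import all_boot all_order all_algebra.
From mathcomp Require Import complex.
From mathcomp Require Import reals.
Set Implicit Arguments. Unset Strict Implicit. Unset Printing Implicit Defensive.
Import Order.TTheory GRing.Theory Num.Theory.
Local Open Scope ring_scope.

Section Lax.
Variable R : realType.
Local Notation C := (complex R).

Definition L1 (p N : nat) (a : nat -> C) : 'M[C]_(N.+2) :=
  \matrix_(i < N.+2, j < N.+2)
    if (j : nat) == (i + p)%N then 1
    else if (i : nat) == j.+1 then a j else 0.

Definition S1 (p N : nat) (a : nat -> C) (l k : nat) : C :=
  ((L1 p N a) ^+ k) (inord l.-1) ord0.

Definition L2 (p N : nat) (b : nat -> C) : 'M[C]_((N + p).+1) :=
  \matrix_(i < (N + p).+1, j < (N + p).+1)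
    if (j : nat) == i.+1 then 1
    else if (i : nat) == (j + p)%N then b j else 0.

Definition S2 (p N : nat) (b : nat -> C) (l k : nat) : C :=
  ((L2 p N b) ^+ k) ord0 (inord l.-1).

End Lax.

(* Both L1^T and L2 are band matrices A of size n+1 with a nonzero superdiagonal
   (al) and a nonzero p-th subdiagonal (be).  Row 0 of A^k vanishes beyond
   column k and is nonzero at column k, so a polynomial q of degree <= n with
   row 0 of q(A) zero is zero.  A row vector y such that the first p entries of
   every y A^m vanish is zero, by strong induction on the column index k using
   (y A^(m+1))_(k-p) = al_(k-p) (y A^m)_(k-p-1) + be_(k-p) (y A^m)_k.
   If P is the claimed polynomial, q := char_poly A - P has degree <= n and,
   by Cayley-Hamilton, q(A) = -P(A); the recurrence says exactly that the first
   p entries of row 0 of P(A) A^m vanish, hence q = 0. *)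

From HB Require Import structures.
From mathcomp Require Import all_boot all_order all_algebra.
From mathcomp Require Import complex reals zify.
Import Order.TTheory GRing.Theory Num.Theory.
Local Open Scope ring_scope.

Lemma sum_ord_eq_nat (V : nmodType) n (f : 'I_n.+1 -> V) (t : nat) :
  \sum_(k < n.+1) (if (k : nat) == t then f k else 0)
    = if (t <= n)%N then f (inord t) else 0.
Proof.
case: leqP => [le_tn | lt_nt].
  rewrite (bigD1 (inord t)) //= inordK ?ltnS // eqxx big1 ?addr0 // => k ne_k.
  case: eqP => // ekt; case/eqP: ne_k.
  by apply: val_inj; rewrite /= inordK ?ltnS.
rewrite big1 // => k _; case: eqP => // ekt.
by move: (ltn_ord k); rewrite ekt ltnS leqNgt lt_nt.
Qed.

Lemma size_monic_subXn (R : nzRingType) n (q : {poly R}) :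
  q \is monic -> size q = n.+1 -> (size (q - 'X^n)%R <= n)%N.
Proof.
move=> /monicP lead_q size_q; apply/leq_sizeP => j le_nj.
rewrite coefB coefXn; case: eqVneq => [-> | ne_jn].
  by rewrite -lead_q lead_coefE size_q subrr.
by rewrite nth_default ?subr0 // size_q ltn_neqAle eq_sym ne_jn.
Qed.

Lemma trmxX (R : comPzRingType) n (A : 'M[R]_n) k : (A ^+ k)^T = A^T ^+ k.
Proof.
elim: k => [|k IHk]; first by rewrite !expr0 trmx1.
by rewrite exprS exprSr -!mulmxE trmx_mul IHk.
Qed.

Lemma char_poly_trmx (R : comNzRingType) n (A : 'M[R]_n) :
  char_poly A^T = char_poly A.
Proof.
rewrite /char_poly -det_tr; congr (\det _).
by apply/matrixP => i j; rewrite !mxE eq_sym.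
Qed.

Lemma horner_mx_coef (R : comNzRingType) n (A : 'M[R]_n.+1) (q : {poly R}) :
  horner_mx A q = \sum_(i < size q) q`_i *: A ^+ i.
Proof.
rewrite -{1}[q]coefK poly_def rmorph_sum /=; apply: eq_bigr => i _.
by rewrite linearZ /= rmorphXn /= horner_mx_X.
Qed.

Section BandMatrix.

Variables (F : fieldType) (n p : nat) (al be : nat -> F).
Hypothesis p_gt0 : (0 < p)%N.
Hypothesis al_neq0 : forall j, (0 < j <= n)%N -> al j != 0.
Hypothesis be_neq0 : forall j, (j + p <= n)%N -> be j != 0.

Definition band_mx : 'M[F]_n.+1 :=
  \matrix_(i, j) ((if (j : nat) == i.+1 then al j else 0)
                  + (if (i : nat) == (j + p)%N then be j else 0)).

Local Notation A := band_mx.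

Lemma mulmx_band_mx m (M : 'M[F]_(m, n.+1)) i (j : 'I_n.+1) :
  (M *m A) i j = (if (0 < j)%N then al j * M i (inord j.-1) else 0)
                 + (if (j + p <= n)%N then be j * M i (inord (j + p)) else 0).
Proof.
rewrite mxE; under eq_bigr => k _ do rewrite mxE mulrDr.
rewrite big_split /=; congr (_ + _).
  case: j => [[|j] lt_jn] /=; first by rewrite big1 // => k _; rewrite mulr0.
  under eq_bigr => k _ do rewrite eqSS eq_sym fun_if mulr0 mulrC.
  by rewrite sum_ord_eq_nat -ltnS (ltnW lt_jn).
under eq_bigr => k _ do rewrite fun_if mulr0 mulrC.
exact: sum_ord_eq_nat.
Qed.

Lemma expr_band_mx_row0_gt k (j : 'I_n.+1) : (k < j)%N -> (A ^+ k) ord0 j = 0.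
Proof.
elim: k j => [|k IHk] j lt_kj.
  by rewrite expr0 mxE; case: eqVneq => // j0; rewrite -j0 in lt_kj.
rewrite exprSr -mulmxE mulmx_band_mx IHk ?mulr0 ?if_same ?add0r; last first.
  by have lt_jn := ltn_ord j; rewrite inordK; lia.
by case: ifP => // le_jpn; rewrite IHk ?mulr0 // inordK; lia.
Qed.

Lemma expr_band_mx_row0_diag k :
  (k <= n)%N -> (A ^+ k) ord0 (inord k) = \prod_(1 <= i < k.+1) al i.
Proof.
elim: k => [|k IHk] le_kn.
  rewrite expr0 big_geq // mxE (_ : inord 0 = ord0) //.
  by apply: val_inj; rewrite /= inordK.
rewrite exprSr -mulmxE mulmx_band_mx inordK //= IHk ?(ltnW le_kn) //.
rewrite [RHS]big_nat_recr //= mulrC; case: ifP => [le_kpn | _]; last by rewrite addr0.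
by rewrite expr_band_mx_row0_gt ?mulr0 ?addr0 // inordK; lia.
Qed.

Lemma row0_horner_band_mx_eq0 (q : {poly F}) :
  (size q <= n.+1)%N -> row ord0 (horner_mx A q) = 0 -> q = 0.
Proof.
move=> size_q /rowP row0; apply/eqP; apply: contraT => q_neq0.
have size_qE : size q = (size q).-1.+1 by rewrite prednK // size_poly_gt0.
set d := (size q).-1 in size_qE; have le_dn : (d <= n)%N by rewrite -ltnS -size_qE.
have lead_q_neq0 : q`_d != 0 by rewrite -lead_coefE lead_coef_eq0.
have diag_neq0 : \prod_(1 <= i < d.+1) al i != 0.
  rewrite prodf_seq_neq0; apply/allP => i.
  by rewrite mem_index_iota => /andP[? ?]; apply: al_neq0; lia.
have := row0 (inord d); rewrite !mxE horner_mx_coef summxE size_qE big_ord_recr /=.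
rewrite big1 => [|i _]; last first.
  by have lt_id := ltn_ord i; rewrite mxE expr_band_mx_row0_gt ?mulr0 // inordK; lia.
rewrite add0r mxE expr_band_mx_row0_diag // => /eqP.
by rewrite mulf_eq0 (negbTE lead_q_neq0) (negbTE diag_neq0).
Qed.

Lemma band_mx_observable (y : 'rV[F]_n.+1) :
  (forall m (j : 'I_n.+1), (j < p)%N -> (y *m A ^+ m) 0 j = 0) -> y = 0.
Proof.
move=> y_obs.
suff yA_eq0 k m : (k <= n)%N -> (y *m A ^+ m) 0 (inord k) = 0.
  apply/rowP => j; have := yA_eq0 j 0%N (ltn_ord j).
  by rewrite expr0 mulmx1 inord_val mxE.
elim/ltn_ind: k m => k IHk m le_kn.
have [lt_kp | le_pk] := ltnP k p; first by rewrite y_obs // inordK.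
have lt_kp_k : (k - p < k)%N by lia.
have := IHk _ lt_kp_k m.+1 (leq_trans (leq_subr p k) le_kn).
rewrite exprSr -mulmxE mulmxA mulmx_band_mx inordK ?subnK ?le_kn //; last by lia.
rewrite (IHk (k - p).-1) ?mulr0 ?if_same ?add0r; [|lia|lia].
have be_kp_neq0 : be (k - p) != 0 by rewrite be_neq0 ?subnK.
by move/eqP; rewrite mulf_eq0 (negbTE be_kp_neq0) => /eqP.
Qed.

Lemma horner_band_mx_eq0 (q : {poly F}) :
  (size q <= n.+1)%N ->
  (forall m (j : 'I_n.+1), (j < p)%N -> (horner_mx A q *m A ^+ m) ord0 j = 0) ->
  q = 0.
Proof.
move=> size_q qA_eq0.
apply: row0_horner_band_mx_eq0 => //; apply: band_mx_observable => // m j lt_jp.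
by rewrite -row_mul mxE qA_eq0.
Qed.

Lemma char_poly_band_mx (c : nat -> F) :
  (forall k (j : 'I_n.+1), (n < k)%N -> (j < p)%N ->
     (A ^+ k) ord0 j = \sum_(v < n.+1) c v * (A ^+ (k - v - 1)) ord0 j) ->
  char_poly A = 'X^(n.+1) - \sum_(v < n.+1) (c v)%:P * 'X^(n - v).
Proof.
move=> rec; set P := 'X^(n.+1) - _.
have size_chi_P : (size (char_poly A - P)%R <= n.+1)%N.
  rewrite opprB addrCA addrC; apply: leq_trans (size_polyD _ _) _.
  rewrite geq_max size_monic_subXn ?char_poly_monic ?size_char_poly //=.
  apply: leq_trans (size_sum _ _ _) _; apply/bigmax_leqP => v _.
  rewrite mul_polyC; apply: leq_trans (size_scale_leq _ _) _.
  by rewrite size_polyXn ltnS leq_subr.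
have PA_row0 m (j : 'I_n.+1) : (j < p)%N -> (horner_mx A P *m A ^+ m) ord0 j = 0.
  move=> lt_jp; rewrite rmorphB rmorph_sum /= rmorphXn /= horner_mx_X.
  under eq_bigr => v _ do rewrite mul_polyC linearZ /= rmorphXn /= horner_mx_X.
  rewrite mulmxBl mulmx_suml mulmxE -exprD.
  under eq_bigr => v _ do rewrite -scalerAl -exprD.
  rewrite !mxE summxE rec ?addSn //; last by lia.
  rewrite [X in _ - X](eq_bigr (fun v : 'I_n.+1 =>
                          c v * (A ^+ ((n + m).+1 - v - 1)) ord0 j)).
    by rewrite subrr.
  by move=> v _; rewrite mxE; congr (_ * (A ^+ _) _ _); have := ltn_ord v; lia.
apply/eqP; rewrite -subr_eq0; apply/eqP; apply: horner_band_mx_eq0 => // m j lt_jp.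
by rewrite rmorphB /= Cayley_Hamilton sub0r mulNmx mxE PA_row0 ?oppr0.
Qed.

End BandMatrix.

Arguments band_mx {F} n p al be.

Section LaxMatrices.

Variables (R : realType) (p N : nat).
Hypothesis p_gt0 : (0 < p)%N.

(* [S1 p N a l k] reads column 0 of [L1^k], i.e. row 0 of [(L1^T)^k]. *)
Lemma trmx_L1 (a : nat -> complex R) :
  (L1 p N a)^T = band_mx N.+1 p (fun j => a j.-1) (fun=> 1).
Proof.
apply/matrixP => i j; rewrite !mxE.
case: eqVneq => [ij | _]; last by rewrite addr0; case: eqVneq => // ->.
by rewrite ij ifF ?add0r //; lia.
Qed.

Lemma L2_band (b : nat -> complex R) : L2 p N b = band_mx (N + p) p (fun=> 1) b.
Proof.
apply/matrixP => i j; rewrite !mxE.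
case: eqVneq => [ji | _]; last by rewrite add0r.
by rewrite ji ifF ?addr0 //; lia.
Qed.

End LaxMatrices.

Theorem proposition1 (R : realType) (p N : nat) (a b : nat -> complex R) :
  (1 <= p)%N -> (2 * p - 1 <= N)%N ->
  (forall i : nat, (i <= N)%N -> a i != 0) ->
  (forall i : nat, (i <= N)%N -> b i != 0) ->
  forall Cc Ct : nat -> complex R,
  (forall k l : nat, (N.+2 <= k)%N -> (1 <= l <= p)%N ->
     S1 p N a l k = \sum_(v < N.+2) Cc v * S1 p N a l (k - v - 1)) ->
  (forall k l : nat, ((N + p).+1 <= k)%N -> (1 <= l <= p)%N ->
     S2 p N b l k = \sum_(v < (N + p).+1) Ct v * S2 p N b l (k - v - 1)) ->
  char_poly (L1 p N a)
    = 'X^(N.+2) - \sum_(v < N.+2) (Cc v)%:P * 'X^(N.+1 - v)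
  /\
  char_poly (L2 p N b)
    = 'X^((N + p).+1) - \sum_(v < (N + p).+1) (Ct v)%:P * 'X^(N + p - v).
Proof.
move=> p_gt0 _ a_neq0 b_neq0 Cc Ct recS1 recS2; split.
  rewrite -char_poly_trmx trmx_L1 //.
  apply: char_poly_band_mx => // [j /andP[_ le_jN] | j _ | k j lt_Nk lt_jp].
  - by apply: a_neq0; lia.
  - exact: oner_neq0.
  have le_jp : (1 <= j.+1 <= p)%N by lia.
  move: (recS1 k j.+1 lt_Nk le_jp).
  rewrite /S1 /= inord_val -trmx_L1 // -trmxX mxE => ->.
  by apply: eq_bigr => v _; rewrite -trmxX mxE.
rewrite L2_band //; apply: char_poly_band_mx => // [j _ | j le_jpN | k j lt_k lt_jp].
- exact: oner_neq0.
- by apply: b_neq0; lia.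
have le_jp : (1 <= j.+1 <= p)%N by lia.
by move: (recS2 k j.+1 lt_k le_jp); rewrite /S2 /= inord_val -L2_band.
Qed.
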